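(* Let $y\in\tilde W$ and $s\in\tilde{\mathbb S}$ with $\ell(sy\delta(s))=\ell(y)$. If $y\mathbf a$ is a $(J,w,\delta)$-alcove (for some $J\subset\mathbb S$ with $\delta(J)=J$ and $w\in W$), then $sy\delta(s)\mathbf a$ is a $(J,\bar sw,\delta)$-alcove, where $\bar s$ is the image of $s$ in $W$.
   Context: Let $\tilde W=X_*(T)_\Gamma\rtimes W$ be the Iwahori–Weyl group of a quasi-split connected semisimple group $G$ over a local field $F$ (finite extension of $\mathbb Q_p$ or $\mathbb F_q((\epsilon))$) split over a tamely ramified extension, relative to a maximal $L$-split torus $S$ defined over $F$ with centralizer $T$, where $L$ is the completion of the maximal unramified extension of $F$ and $\Gamma=\mathrm{Gal}(\bar L/L)$. $\delta$ is the automorphism of $\tilde W$ (and of $W$) induced by the Frobenius of $L/F$. $V=X_*(T)_\Gamma\otimes\mathbb R$; $\Sigma$ is the reduced root system with affine roots $v\mapsto\langle a,v\rangle+k$ ($a\in\Sigma,k\in\mathbb Z$), $H_{a,k}=\{v:\langle a,v\rangle=k\}$, $W=W(\Sigma)$. $\mathbf a$ is a fixed $\sigma$-stable base alcove lying in the anti-dominant chamber; $\ell$ is the length function on $\tilde W$ (number of affine root hyperplanes separating $x\mathbf a$ from $\mathbf a$); $\tilde{\mathbb S}$ the simple affine reflections; $\mathbb S$ the simple roots/simple reflections of $W$ determined by the chamber; $\Sigma^+$ positive roots; for $J\subset\mathbb S$, $\Sigma_J$ roots spanned by $J$, $\Sigma_J^+=\Sigma_J\cap\Sigma^+$, $W_J$,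 $\tilde W_J=X_*(T)_\Gamma\rtimes W_J$. For an alcove $\mathbf b$ and $a\in\Sigma$, $k(a,\mathbf b)$ is the integer $k$ with $\mathbf b$ between $H_{a,k}$ and $H_{a,k-1}$. $x\mathbf a$ is a $(J,w,\delta)$-alcove if (1) $w^{-1}x\delta(w)\in\tilde W_J$ and (2) $k(a,x\mathbf a)\ge k(a,\mathbf a)$ for all $a\in w(\Sigma^+\setminus\Sigma_J^+)$ (this is equivalent to the group-theoretic condition $\mathbf U_a(L)\cap xIx^{-1}\subseteq\mathbf U_a(L)\cap I$ for root subgroups, with $I$ the Iwahori of $\mathbf a$). *)

From HB Require Import structures.
From mathcomp Require Import all_boot all_order all_algebra.
From mathcomp Require Import reals.
Set Implicit Arguments. Unset Strict Implicit. Unset Printing Implicit Defensive.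
Import Order.TTheory GRing.Theory Num.Theory.
Local Open Scope ring_scope.

(* V = R^n as column vectors 'cV_n; V^* = row vectors 'rV_n;
   pairing <a, v> = a *m v. *)
Definition pairing (R : realType) (n : nat) (a : 'rV[R]_n) (v : 'cV[R]_n) : R :=
  (a *m v) 0 0.

Definition reflmx (R : realType) (n : nat) (a : 'rV[R]_n) (av : 'cV[R]_n)
  : 'M[R]_n := 1%:M - av *m a.

Inductive genW (R : realType) (n : nat) (cor : 'rV[R]_n -> 'cV[R]_n)
    (P : 'rV[R]_n -> Prop) : 'M[R]_n -> Prop :=
  | genW1 : genW cor P 1%:M
  | genWS a w : P a -> genW cor P w -> genW cor P (reflmx a (cor a) *m w).

(* Data: reduced root system Sigma (roots) with coroots (cor) in V^* / V,
   the image Lambda (lat) of X_*(T)_Gamma in V, the linear action theta of the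
   Frobenius on V, and a point basept of the base alcove a. *)
Record AffRootData (R : realType) (n : nat) := {
  roots : seq 'rV[R]_n;
  cor : 'rV[R]_n -> 'cV[R]_n;
  lat : 'cV[R]_n -> Prop;
  theta : 'M[R]_n;
  basept : 'cV[R]_n;
  roots_uniq : uniq roots;
  pairing_cor : forall a, a \in roots -> pairing a (cor a) = 2;
  roots_refl : forall a b, a \in roots -> b \in roots ->
                 b *m reflmx a (cor a) \in roots;
  cor_refl : forall a b, a \in roots -> b \in roots ->
                 cor (b *m reflmx a (cor a)) = reflmx a (cor a) *m cor b;
  roots_int : forall a b, a \in roots -> b \in roots ->
                 pairing b (cor a) \is a Num.int;
  roots_reduced : forall a (c : R), a \in roots -> c *: a \in roots ->
                 c = 1 \/ c = -1;
  roots_span : forall v, (forall a, a \in roots -> pairing a v = 0) -> v = 0;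
  lat0 : lat 0;
  latD : forall u v, lat u -> lat v -> lat (u + v);
  latN : forall u, lat u -> lat (- u);
  lat_cor : forall a, a \in roots -> lat (cor a);
  lat_W : forall w u, genW cor (fun a => a \in roots) w -> lat u -> lat (w *m u);
  lat_int : forall u a, lat u -> a \in roots -> pairing a u \is a Num.int;
  (* base alcove a: the alcove containing basept; it lies in the
     anti-dominant chamber and its closure contains the origin *)
  basept_generic : forall a, a \in roots -> pairing a basept \isn't a Num.int;
  basept_small : forall a, a \in roots -> -1 < pairing a basept < 1;
  theta_unit : theta \in unitmx;
  theta_roots : forall a, (a \in roots) = (a *m invmx theta \in roots);
  theta_cor : forall a, a \in roots -> cor (a *m invmx theta) = theta *m cor a;
  theta_lat : forall u, lat u <-> lat (theta *m u);
  theta_alcove : forall a, a \in roots ->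
     Num.floor (pairing a (theta *m basept)) = Num.floor (pairing a basept)
}.

Section Defs.
Variables (R : realType) (n : nat) (D : AffRootData R n).

Definition inRoots (a : 'rV[R]_n) : Prop := a \in roots D.
Definition inW (w : 'M[R]_n) : Prop := genW (cor D) inRoots w.
Definition inWJ (J : seq 'rV[R]_n) (w : 'M[R]_n) : Prop :=
  genW (cor D) (fun a => a \in J) w.

(* Iwahori-Weyl group elements as affine maps v |-> x.1 *m v + x.2 *)
Definition Wt := ('M[R]_n * 'cV[R]_n)%type.
Definition inWt (x : Wt) : Prop := inW x.1 /\ lat D x.2.
Definition act (x : Wt) (v : 'cV[R]_n) : 'cV[R]_n := x.1 *m v + x.2.
Definition mulWt (x y : Wt) : Wt := (x.1 *m y.1, x.1 *m y.2 + x.2).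
Definition deltaW (w : 'M[R]_n) : 'M[R]_n := theta D *m w *m invmx (theta D).
Definition delta (x : Wt) : Wt := (deltaW x.1, theta D *m x.2).

(* positive roots: those negative on the (anti-dominant) base alcove *)
Definition posroot (a : 'rV[R]_n) : bool :=
  (a \in roots D) && (pairing a (basept D) < 0).
Definition simpleroot (a : 'rV[R]_n) : Prop :=
  posroot a /\ ~ (exists b c, [/\ posroot b, posroot c & a = b + c]).
Definition in_spanJ (J : seq 'rV[R]_n) (a : 'rV[R]_n) : Prop :=
  exists c : 'rV[R]_n -> R, a = \sum_(b <- J) c b *: b.

(* k(a, b) for the alcove b containing the generic point v:
   b lies between H_{a,k} and H_{a,k-1} *)
Definition kval (a : 'rV[R]_n) (v : 'cV[R]_n) : int := Num.floor (pairing a v) + 1.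
Definition kalc (a : 'rV[R]_n) (x : Wt) : int := kval a (act x (basept D)).

(* length: number of hyperplanes H_{a,k} (a positive, k in Z) separating
   x a from a *)
Definition len (x : Wt) : nat :=
  \sum_(a <- roots D | posroot a)
     `|Num.floor (pairing a (act x (basept D))) - Num.floor (pairing a (basept D))|%N.

(* H_{a,k} is a wall of the base alcove: it meets the closure of a in a
   point lying on no other affine root hyperplane *)
Definition wall (a : 'rV[R]_n) (k : int) : Prop :=
  a \in roots D /\
  exists q : 'cV[R]_n,
    [/\ pairing a q = k%:~R,
        (forall b, b \in roots D ->
           (Num.floor (pairing b (basept D)))%:~R <= pairing b q <=
           (Num.floor (pairing b (basept D)))%:~R + 1)
      & (forall b (m : int), b \in roots D -> pairing b q = m%:~R ->
           (b = a /\ m = k) \/ (b = - a /\ m = - k))].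

Definition saff (a : 'rV[R]_n) (k : int) : Wt :=
  (reflmx a (cor D a), k%:~R *: cor D a).
Definition simple_aff (s : Wt) : Prop :=
  exists a k, wall a k /\ s = saff a k.

Definition JW_alcove (J : seq 'rV[R]_n) (w : 'M[R]_n) (x : Wt) : Prop :=
  inWJ J (invmx w *m x.1 *m deltaW w) /\
  (forall b, posroot b -> ~ in_spanJ J b ->
     kalc (b *m invmx w) (1%:M, 0) <= kalc (b *m invmx w) x).

End Defs.

(* Write [z = s y delta(s)] with [s] the reflection in the wall [H_{al,k}] of the
   base alcove, and [p] for the base point.  For a root [b] let [excess b] be
   [floor <b, y p> - floor <b, p>] and [wall_jump b] be [floor <b, s p> - floor <b, p>];
   since [s p] only crosses [H_{al,k}], the jump lies in {-1,0,1} and vanishes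
   unless [b = +-al].  With [psi b = b ybar theta] and
   [defect b = wall_jump (psi b) - wall_jump b], the (J, sbar w, delta)-condition
   for [z] at a root [c] with [c w] positive outside [Sigma_J] reads
   [excess c + defect c >= 0], the same condition for [y] reads [excess c >= 0],
   and [len z = len y] reads [sum |excess + defect| = sum |excess|].  As [W_J]
   permutes the positive roots outside [Sigma_J], the set of such [c] is stable
   under [psi] and its inverse.  If [excess c + defect c < 0], then [excess c = 0],
   [defect c = -1], and the defect is supported on [+-c, +-c'] for another such
   [c'] with [defect c' = 1]; hence [excess] and [defect] have the same sign
   everywhere, so [sum |excess + defect| = sum |excess| + sum |defect|], forcing
   [defect = 0]: a contradiction. *)

From HB Require Import structures.
From mathcomp Require Import all_boot all_order all_algebra.
From mathcomp Require Import reals.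
From mathcomp Require Import ring lra zify.
Set Implicit Arguments. Unset Strict Implicit. Unset Printing Implicit Defensive.
Import Order.TTheory GRing.Theory Num.Theory.
Local Open Scope ring_scope.

Section Pairing.
Variables (R : realType) (n : nat).
Implicit Types (a b : 'rV[R]_n) (u v : 'cV[R]_n) (M : 'M[R]_n).

Lemma pairing_mulmx a M v : pairing (a *m M) v = pairing a (M *m v).
Proof. by rewrite /pairing mulmxA. Qed.

Lemma pairingDl a b v : pairing (a + b) v = pairing a v + pairing b v.
Proof. by rewrite /pairing mulmxDl mxE. Qed.

Lemma pairingDr a u v : pairing a (u + v) = pairing a u + pairing a v.
Proof. by rewrite /pairing mulmxDr mxE. Qed.

Lemma pairingNl a v : pairing (- a) v = - pairing a v.
Proof. by rewrite /pairing mulNmx mxE. Qed.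

Lemma pairingNr a v : pairing a (- v) = - pairing a v.
Proof. by rewrite /pairing mulmxN mxE. Qed.

Lemma pairingBl a b v : pairing (a - b) v = pairing a v - pairing b v.
Proof. by rewrite pairingDl pairingNl. Qed.

Lemma pairingBr a u v : pairing a (u - v) = pairing a u - pairing a v.
Proof. by rewrite pairingDr pairingNr. Qed.

Lemma pairingZl (c : R) a v : pairing (c *: a) v = c * pairing a v.
Proof. by rewrite /pairing -scalemxAl mxE. Qed.

Lemma pairingZr (c : R) a v : pairing a (c *: v) = c * pairing a v.
Proof. by rewrite /pairing -scalemxAr mxE. Qed.

Lemma pairing0r a : pairing a (0 : 'cV_n) = 0.
Proof. by rewrite /pairing mulmx0 mxE. Qed.

Lemma row_pairing_inj a b : (forall v, pairing a v = pairing b v) -> a = b.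
Proof.
by move=> eq_ab; apply/rowP => j; have := eq_ab (delta_mx j 0); rewrite /pairing -!colE !mxE.
Qed.

Lemma reflmx_row a av b : b *m reflmx a av = b - pairing b av *: a.
Proof.
by rewrite /reflmx mulmxBr mulmx1 mulmxA [b *m av]mx11_scalar mul_scalar_mx.
Qed.

Lemma reflmx_col a av u : reflmx a av *m u = u - pairing a u *: av.
Proof.
by rewrite /reflmx mulmxBl mul1mx -mulmxA [a *m u]mx11_scalar mul_mx_scalar.
Qed.

Lemma reflmxK a av : pairing a av = 2 -> reflmx a av *m reflmx a av = 1%:M.
Proof.
move=> a_av; rewrite {2}/reflmx mulmxBr mulmx1 mulmxA reflmx_col a_av.
have -> : av - 2 *: av = - av by apply/matrixP=> i j; rewrite !mxE; ring.
by rewrite mulNmx opprK /reflmx subrK.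
Qed.

End Pairing.

Lemma mulmx1_invmx (R : comUnitRingType) k (X Y : 'M[R]_k) :
  X *m Y = 1%:M -> invmx X = Y.
Proof.
by move=> XY1; have [uX _] := mulmx1_unit XY1; rewrite -[RHS](mulKmx uX) XY1 mulmx1.
Qed.

Lemma invmxM (R : comUnitRingType) k (X Y : 'M[R]_k) :
  X \in unitmx -> Y \in unitmx -> invmx (X *m Y) = invmx Y *m invmx X.
Proof.
move=> uX uY; apply: mulmx1_invmx.
by rewrite mulmxA -[X *m Y *m _]mulmxA mulmxV // mulmx1 mulmxV.
Qed.

Section RootSystem.
Variables (R : realType) (n : nat) (D : AffRootData R n).
Local Notation rts := (roots D).
Local Notation Th := (theta D).
Implicit Types (a b : 'rV[R]_n) (M : 'M[R]_n).

Definition srefl a := reflmx a (cor D a).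

Lemma sreflK a : a \in rts -> srefl a *m srefl a = 1%:M.
Proof. by move=> Ha; apply/reflmxK/pairing_cor. Qed.

Lemma srefl_unit a : a \in rts -> srefl a \in unitmx.
Proof. by move=> Ha; case: (mulmx1_unit (sreflK Ha)). Qed.

Lemma invmx_srefl a : a \in rts -> invmx (srefl a) = srefl a.
Proof. by move=> Ha; apply/mulmx1_invmx/sreflK. Qed.

Lemma rootsN a : a \in rts -> - a \in rts.
Proof.
move=> Ha; have := roots_refl Ha Ha; rewrite reflmx_row (pairing_cor Ha).
suff -> : a - 2 *: a = - a by [].
by apply/matrixP=> i j; rewrite !mxE; ring.
Qed.

Section GeneratedGroup.
Variable P : 'rV[R]_n -> Prop.
Hypothesis P_roots : forall a, P a -> a \in rts.

Lemma genW_unit M : genW (cor D) P M -> M \in unitmx.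
Proof.
elim=> [|a w Pa _ uw]; first exact: unitmx1.
by rewrite unitmx_mul srefl_unit ?P_roots.
Qed.

Lemma genW_mul M1 M2 :
  genW (cor D) P M1 -> genW (cor D) P M2 -> genW (cor D) P (M1 *m M2).
Proof.
move=> W1 W2; elim: W1 => [|a w Pa _ IH]; first by rewrite mul1mx.
by rewrite -mulmxA; apply: genWS.
Qed.

Lemma genW_srefl a : P a -> genW (cor D) P (srefl a).
Proof. by move=> Pa; rewrite -[srefl a]mulmx1; apply: genWS => //; apply: genW1. Qed.

Lemma genW_inv M : genW (cor D) P M -> genW (cor D) P (invmx M).
Proof.
elim=> [|a w Pa Ww IH]; first by rewrite invmx1; apply: genW1.
rewrite invmxM ?srefl_unit ?P_roots ?(genW_unit Ww) // invmx_srefl ?P_roots //.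
exact/genW_mul/genW_srefl.
Qed.

Lemma genW_roots M b : genW (cor D) P M -> b \in rts -> b *m M \in rts.
Proof.
move=> WM; elim: WM b => [|a w Pa _ IH] b Hb; first by rewrite mulmx1.
by rewrite mulmxA; apply/IH/roots_refl => //; apply: P_roots.
Qed.

End GeneratedGroup.

Lemma inW_unit M : inW D M -> M \in unitmx.
Proof. exact: genW_unit. Qed.

Lemma inW_roots M b : inW D M -> b \in rts -> b *m M \in rts.
Proof. exact: genW_roots. Qed.

Lemma inW_inv M : inW D M -> inW D (invmx M).
Proof. exact: genW_inv. Qed.

Lemma inW_mul M1 M2 : inW D M1 -> inW D M2 -> inW D (M1 *m M2).
Proof. exact: genW_mul. Qed.

Lemma inW_rootsV M b : inW D M -> b \in rts -> b *m invmx M \in rts.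
Proof. by move=> WM; apply/inW_roots/inW_inv. Qed.

Lemma roots_mulTh a : (a *m Th \in rts) = (a \in rts).
Proof. by rewrite (theta_roots D (a *m Th)) mulmxK // theta_unit. Qed.

Lemma roots_mulThV a : (a *m invmx Th \in rts) = (a \in rts).
Proof. by rewrite (theta_roots D a). Qed.

Lemma deltaWM M1 M2 : deltaW D (M1 *m M2) = deltaW D M1 *m deltaW D M2.
Proof.
rewrite /deltaW !mulmxA; congr (_ *m _).
by rewrite -[Th *m M1 *m invmx Th *m Th]mulmxA mulVmx ?theta_unit // mulmx1.
Qed.

Lemma deltaW_srefl a : a \in rts -> deltaW D (srefl a) = srefl (a *m invmx Th).
Proof.
move=> Ha; rewrite /deltaW /srefl /reflmx theta_cor //.
by rewrite mulmxBr mulmx1 mulmxBl mulmxV ?theta_unit // !mulmxA.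
Qed.

Lemma inW_deltaW M : inW D M -> inW D (deltaW D M).
Proof.
elim=> [|a w Ha _ IH].
  by rewrite /deltaW mulmx1 mulmxV ?theta_unit //; apply: genW1.
by rewrite deltaWM deltaW_srefl //; apply: genWS => //; rewrite /inRoots roots_mulThV.
Qed.

End RootSystem.

Lemma floorN_Nint (R : realType) (x : R) :
  x \isn't a Num.int -> Num.floor (- x) = - Num.floor x - 1.
Proof. by move=> x_Nint; rewrite floorNceil opprK ceil_floor x_Nint opprD. Qed.

Lemma floor_closed_itv (R : realType) (x : R) (m : int) :
  x \isn't a Num.int -> m%:~R <= x <= m%:~R + 1 -> Num.floor x = m.
Proof.
move=> x_Nint /andP[mx xm1]; apply: floor_def; rewrite mx intrD lt_neqAle xm1 andbT.
by apply: contraNneq x_Nint => ->; rewrite rpredD ?intr_int.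
Qed.

Lemma ge_limit_segment (R : realFieldType) (m x0 d : R) :
  (forall e, 0 < e -> e <= 1 -> m <= x0 + e * d) -> m <= x0.
Proof.
move=> near_x0; rewrite leNgt; apply/negP => x0m.
pose e := Num.min 1 ((m - x0) / (`|d| + 1)).
have d1 : 0 < `|d| + 1 by rewrite ltr_pwDr.
have e0 : 0 < e by rewrite lt_min ltr01 divr_gt0 // subr_gt0.
have e1 : e <= 1 by rewrite ge_min lexx.
have e_gap : e * (`|d| + 1) <= m - x0 by rewrite -ler_pdivlMr // ge_min lexx orbT.
have ed : e * d <= e * `|d| by rewrite ler_pM2l // ler_norm.
by have := near_x0 e e0 e1; lra.
Qed.

Lemma segment_limit_itv (R : realFieldType) (m x0 d : R) :
  (forall e, 0 < e -> e <= 1 -> m <= x0 + e * d <= m + 1) -> m <= x0 <= m + 1.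
Proof.
move=> near_x0; apply/andP; split.
  by apply: (ge_limit_segment (d := d)) => e e0 e1; case/andP: (near_x0 e e0 e1).
rewrite -lerN2; apply: (ge_limit_segment (d := - d)) => e e0 e1.
by case/andP: (near_x0 e e0 e1) => _; rewrite mulrN -opprD lerN2.
Qed.

Section Alcoves.
Variables (R : realType) (n : nat) (D : AffRootData R n).
Local Notation rts := (roots D).
Local Notation bp := (basept D).
Implicit Types (a b : 'rV[R]_n) (u v q : 'cV[R]_n) (x y : Wt R n).

Definition fl b v : int := Num.floor (pairing b v).

Lemma actM x y v : act (mulWt x y) v = act x (act y v).
Proof. by rewrite /act /mulWt /= mulmxDr mulmxA addrA. Qed.

Lemma act1 v : act (1%:M, 0) v = v.
Proof. by rewrite /act /= mul1mx addr0. Qed.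

Lemma inWt1 : inWt D (1%:M, 0).
Proof. by split; [apply: genW1 | apply: lat0]. Qed.

Lemma inWtM x y : inWt D x -> inWt D y -> inWt D (mulWt x y).
Proof.
move=> [x1 x2] [y1 y2]; split; first exact: inW_mul.
by apply: latD => //; apply: lat_W.
Qed.

Lemma lat_scale_int u (k : int) : lat D u -> lat D (k%:~R *: u).
Proof.
move=> Lu; have Lnat m : lat D (m%:R *: u).
  elim: m => [|m IH]; first by rewrite scale0r; apply: lat0.
  by rewrite -natr1 scalerDl scale1r; apply: latD.
case: k => m; first exact: Lnat.
by rewrite NegzE mulrNz scaleNr; apply/latN/Lnat.
Qed.

Lemma inWt_saff a k : a \in rts -> inWt D (saff D a k).
Proof. by move=> Ha; split; [apply: genW_srefl | apply/lat_scale_int/lat_cor]. Qed.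

Lemma inWt_delta x : inWt D x -> inWt D (delta D x).
Proof. by move=> [x1 x2]; split; [exact: inW_deltaW | exact: (proj1 (theta_lat D x.2))]. Qed.

Lemma fl_act x b v : inWt D x -> b \in rts ->
  fl b (act x v) = fl (b *m x.1) v + Num.floor (pairing b x.2).
Proof.
by move=> [x1 x2] Hb; rewrite /fl /act pairingDr pairing_mulmx floorDrz // (lat_int x2).
Qed.

Lemma pairing_act_Nint x b : inWt D x -> b \in rts ->
  pairing b (act x bp) \isn't a Num.int.
Proof.
move=> [x1 x2] Hb; apply: contraNN (basept_generic (inW_roots x1 Hb)) => b_int.
have -> : pairing (b *m x.1) bp = pairing b (act x bp) - pairing b x.2.
  by rewrite /act pairingDr pairing_mulmx addrK.
by rewrite rpredB // (lat_int x2).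
Qed.

Lemma flN_act x b : inWt D x -> b \in rts ->
  fl (- b) (act x bp) = - fl b (act x bp) - 1.
Proof. by move=> Wx Hb; rewrite /fl pairingNl floorN_Nint // pairing_act_Nint. Qed.

Lemma flN_basept b : b \in rts -> fl (- b) bp = - fl b bp - 1.
Proof. by move=> Hb; have := flN_act inWt1 Hb; rewrite act1. Qed.

Lemma fl_basept_pos b : posroot D b -> fl b bp = -1.
Proof.
case/andP=> Hb b_neg; apply: floor_def.
by have /andP[b_gt _] := basept_small Hb; rewrite ltW.
Qed.

Lemma pairing_basept_neq0 b : b \in rts -> pairing b bp != 0.
Proof. by move=> Hb; apply: contraNneq (basept_generic Hb) => ->; rewrite rpred0. Qed.

Lemma posrootN b : b \in rts -> posroot D (- b) = ~~ posroot D b.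
Proof.
move=> Hb; rewrite /posroot rootsN // Hb pairingNl /= oppr_lt0 -leNgt.
by rewrite le_eqVlt eq_sym (negbTE (pairing_basept_neq0 Hb)).
Qed.

(* Convexity: the half-open segment from a point [q] of the closure of the base
   alcove to [bp] stays in the base alcove. *)
Lemma fl_segment_basept q e c : 0 < e -> e <= 1 ->
  (forall b, b \in rts -> (fl b bp)%:~R <= pairing b q <= (fl b bp)%:~R + 1) ->
  c \in rts -> fl c (q + e *: (bp - q)) = fl c bp.
Proof.
move=> e0 e1 q_cl Hc; apply: floor_def.
rewrite pairingDr pairingZr pairingBr intrD.
have /andP[q1 q2] := q_cl c Hc; have /andP[b1 b2] := floor_itv (pairing c bp).
rewrite intrD in b2.
have b1' : (fl c bp)%:~R < pairing c bp.
  rewrite lt_neqAle b1 andbT; apply: contraNneq (basept_generic Hc) => <-.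
  exact: intr_int.
rewrite /fl in q1 q2 b1' b2 *.
set f := Num.floor (pairing c bp) in q1 q2 b1' b2 *.
set x := pairing c q in q1 q2 *; set z := pairing c bp in b1' b2 *.
have q_lo : 0 <= (1 - e) * (x - f%:~R) by rewrite mulr_ge0 // subr_ge0.
have bp_lo : 0 < e * (z - f%:~R) by rewrite mulr_gt0 // subr_gt0.
have q_hi : 0 <= (1 - e) * (f%:~R + 1 - x) by rewrite mulr_ge0 // subr_ge0.
have bp_hi : 0 < e * (f%:~R + 1 - z) by rewrite mulr_gt0 // subr_gt0.
apply/andP; split; nra.
Qed.

End Alcoves.

Section Wall.
Variables (R : realType) (n : nat) (D : AffRootData R n).
Local Notation rts := (roots D).
Local Notation bp := (basept D).
Implicit Types (b : 'rV[R]_n) (v q : 'cV[R]_n).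

Variables (al : 'rV[R]_n) (k : int).
Hypothesis Hwall : wall D al k.
Local Notation s := (saff D al k).

Lemma wall_root : al \in rts.
Proof. by case: Hwall. Qed.

Lemma inWt_wall : inWt D s.
Proof. exact: inWt_saff wall_root. Qed.

Lemma act_saffK v : act s (act s v) = v.
Proof.
rewrite /act /saff /= mulmxDr mulmxA (sreflK wall_root) mul1mx -addrA.
rewrite reflmx_col pairingZr (pairing_cor wall_root).
suff -> : k%:~R *: cor D al - k%:~R * 2 *: cor D al + k%:~R *: cor D al = 0.
  by rewrite addr0.
by apply/matrixP=> i j; rewrite !mxE; ring.
Qed.

Lemma act_saff_segment q v e : pairing al q = k%:~R ->
  act s (q + e *: (v - q)) = q + e *: (act s v - q).
Proof.
move=> q_wall; have q_fix : act s q = q by rewrite /act reflmx_col q_wall subrK.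
rewrite /act /= in q_fix *; rewrite mulmxDr -scalemxAr mulmxBr -[in RHS]q_fix.
by apply/matrixP=> i j; rewrite !mxE; ring.
Qed.

Definition wall_jump b : int := fl b (act s bp) - fl b bp.

(* [s] fixes a point [q] of the wall lying on no other hyperplane, so for
   [b != +-al] the [b]-floor is constant on the image of the segment [q, bp]. *)
Lemma wall_jump_eq0 b : b \in rts -> b != al -> b != - al -> wall_jump b = 0.
Proof.
move=> Hb b_al b_Nal; apply/eqP; rewrite subr_eq0; apply/eqP.
case: Hwall => _ [q [q_wall q_cl q_walls]].
have q_Nint : pairing b q \isn't a Num.int.
  apply/negP => /intrP[m /(q_walls b m Hb)] [][eq_b _].
    by rewrite eq_b eqxx in b_al.
  by rewrite eq_b eqxx in b_Nal.
have -> : fl b bp = Num.floor (pairing b q).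
  by rewrite (floor_closed_itv q_Nint (q_cl b Hb)).
symmetry; apply: floor_closed_itv q_Nint _.
have s_seg e : 0 < e -> e <= 1 ->
    fl b (act s (q + e *: (bp - q))) = fl b (act s bp).
  move=> e0 e1; rewrite !(fl_act _ inWt_wall Hb) fl_segment_basept //.
  by apply: inW_roots Hb; case: inWt_wall.
apply: (segment_limit_itv (d := pairing b (act s bp) - pairing b q)) => e e0 e1.
have /andP[lo hi] := floor_itv (pairing b (act s (q + e *: (bp - q)))).
rewrite -/(fl _ _) s_seg // act_saff_segment // pairingDr pairingZr pairingBr in lo hi.
by rewrite lo (le_trans (ltW hi)) // intrD.
Qed.

Lemma wall_jumpN b : b \in rts -> wall_jump (- b) = - wall_jump b.
Proof.
by move=> Hb; rewrite /wall_jump (flN_act inWt_wall Hb) (flN_basept Hb); ring.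
Qed.

(* [s p] is the mirror image of [p] in [H_{al,k}], and [k] lies within 1 of [<al, p>]. *)
Lemma wall_jump_wall : -1 <= wall_jump al <= 1.
Proof.
case: Hwall => Ha [q [q_wall q_cl _]].
have /andP[k_lo k_hi] := q_cl al Ha; rewrite q_wall in k_lo k_hi.
rewrite /wall_jump /fl.
have -> : pairing al (act s bp) = 2 * k%:~R - pairing al bp.
  rewrite /act /saff /= reflmx_col pairingDr pairingBr !pairingZr (pairing_cor Ha).
  ring.
have /andP[b1 b2] := floor_itv (pairing al bp).
have /andP[c1 c2] := floor_itv (2 * k%:~R - pairing al bp).
rewrite /fl in k_lo k_hi.
set f := Num.floor (pairing al bp) in b1 b2 k_lo k_hi *.
set g := Num.floor (2 * k%:~R - pairing al bp) in c1 c2 *.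
rewrite !intrD in b2 c2 k_hi.
have b1' : (f%:~R : R) < pairing al bp.
  rewrite lt_neqAle b1 andbT; apply: contraNneq (basept_generic Ha) => <-.
  exact: intr_int.
have : (g%:~R : R) < (f + 2)%:~R by rewrite intrD; lra.
have : ((f - 2)%:~R : R) < g%:~R by rewrite intrB; lra.
rewrite !ltr_int; lia.
Qed.

Lemma wall_jump_bound b : b \in rts -> -1 <= wall_jump b <= 1.
Proof.
move=> Hb; have [->|b_al] := eqVneq b al; first exact: wall_jump_wall.
have [->|b_Nal] := eqVneq b (- al); last by rewrite wall_jump_eq0.
by rewrite wall_jumpN ?wall_root //; move: wall_jump_wall; lia.
Qed.

Lemma wall_jump_support b : b \in rts -> wall_jump b != 0 -> b = al \/ b = - al.
Proof.
move=> Hb jb; have [->|b_al] := eqVneq b al; first by left.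
have [->|b_Nal] := eqVneq b (- al); first by right.
by rewrite wall_jump_eq0 ?eqxx in jb.
Qed.

Lemma wall_jump_eq0_off e b : e \in rts -> b \in rts -> wall_jump e != 0 ->
  b != e -> b != - e -> wall_jump b = 0.
Proof.
move=> He Hb je b_e b_Ne; apply/eqP/negPn/negP => jb.
by case: (wall_jump_support He je) (wall_jump_support Hb jb) b_e b_Ne => -> [] ->;
  rewrite ?opprK eqxx.
Qed.

End Wall.

Section InvariantForm.
Variables (R : realType) (n : nat) (D : AffRootData R n).
Local Notation rts := (roots D).
Local Notation cr := (cor D).
Implicit Types (a b : 'rV[R]_n) (u v : 'cV[R]_n) (M : 'M[R]_n).

Lemma perm_roots_mulW M : inW D M -> perm_eq [seq b *m M | b <- rts] rts.
Proof.
move=> WM; have uM := inW_unit WM.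
apply: uniq_perm; last 1 first.
- move=> b; apply/mapP/idP => [[c Hc ->]|Hb]; first exact: inW_roots.
  by exists (b *m invmx M); [apply: inW_rootsV | rewrite mulmxKV].
- by rewrite map_inj_uniq ?roots_uniq // => b c bc; rewrite -(mulmxK uM b) bc mulmxK.
- exact: roots_uniq.
Qed.

Lemma big_roots_mulW (T : nmodType) M (h : 'rV[R]_n -> T) : inW D M ->
  \sum_(b <- rts) h (b *m M) = \sum_(b <- rts) h b.
Proof. by move=> WM; rewrite -[RHS](perm_big _ (perm_roots_mulW WM)) big_map. Qed.

Lemma perm_rootsN : perm_eq [seq - b | b <- rts] rts.
Proof.
apply: uniq_perm; last 1 first.
- move=> b; apply/mapP/idP => [[c Hc ->]|Hb]; first exact: rootsN.
  by exists (- b); [apply: rootsN | rewrite opprK].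
- by rewrite map_inj_uniq ?roots_uniq //; apply: oppr_inj.
- exact: roots_uniq.
Qed.

Definition wform u v := \sum_(g <- rts) pairing g u * pairing g v.

Lemma wformC u v : wform u v = wform v u.
Proof. by apply: eq_bigr => g _; rewrite mulrC. Qed.

Lemma wformDl u1 u2 v : wform (u1 + u2) v = wform u1 v + wform u2 v.
Proof. by rewrite /wform -big_split; apply: eq_bigr => g _; rewrite pairingDr mulrDl. Qed.

Lemma wformNl u v : wform (- u) v = - wform u v.
Proof. by rewrite /wform -sumrN; apply: eq_bigr => g _; rewrite pairingNr mulNr. Qed.

Lemma wformZl (c : R) u v : wform (c *: u) v = c * wform u v.
Proof. by rewrite /wform mulr_sumr; apply: eq_bigr => g _; rewrite pairingZr mulrA. Qed.

Lemma wformBl u1 u2 v : wform (u1 - u2) v = wform u1 v - wform u2 v.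
Proof. by rewrite wformDl wformNl. Qed.

Lemma wformNr u v : wform u (- v) = - wform u v.
Proof. by rewrite wformC wformNl wformC. Qed.

Lemma wformZr (c : R) u v : wform u (c *: v) = c * wform u v.
Proof. by rewrite wformC wformZl wformC. Qed.

Lemma wformBr u v1 v2 : wform u (v1 - v2) = wform u v1 - wform u v2.
Proof. by rewrite wformC wformBl !(wformC u). Qed.

Lemma wform_ge0 u : 0 <= wform u u.
Proof. by rewrite sumr_ge0 // => g _; rewrite -expr2 sqr_ge0. Qed.

Lemma wform_eq0 u : wform u u = 0 -> u = 0.
Proof.
move=> /eqP; rewrite /wform psumr_eq0 => [/allP u0|g _]; last by rewrite -expr2 sqr_ge0.
by apply: roots_span => a /u0; rewrite mulf_eq0 orbb => /eqP.
Qed.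

Lemma wform_gt0 u : u != 0 -> 0 < wform u u.
Proof. by move=> u0; rewrite lt_def wform_ge0 andbT; apply: contraNneq u0 => /wform_eq0 ->. Qed.

Lemma cor_neq0 a : a \in rts -> cr a != 0.
Proof.
move=> Ha; apply: contra_eq_neq (pairing_cor Ha) => ->.
by rewrite pairing0r eq_sym pnatr_eq0.
Qed.

Lemma wform_srefl a u v : a \in rts -> wform (srefl D a *m u) (srefl D a *m v) = wform u v.
Proof.
move=> Ha; rewrite /wform -(big_roots_mulW (fun g => pairing g u * pairing g v)
  (@genW_srefl _ _ D (inRoots D) a Ha)).
by apply: eq_bigr => g _; rewrite !pairing_mulmx.
Qed.

Lemma wform_cor b u : b \in rts -> pairing b u * wform (cr b) (cr b) = 2 * wform u (cr b).
Proof.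
move=> Hb; have := wform_srefl u (cr b) Hb.
rewrite /srefl !reflmx_col (pairing_cor Hb).
have -> : cr b - 2 *: cr b = - cr b by apply/matrixP=> i j; rewrite !mxE; ring.
by rewrite wformNr wformBl wformZl => ?; lra.
Qed.

Lemma pairing_cor_gt0C a b : a \in rts -> b \in rts ->
  0 < pairing b (cr a) -> 0 < pairing a (cr b).
Proof.
move=> Ha Hb ba_gt0; have Ca := wform_gt0 (cor_neq0 Ha).
have Cb := wform_gt0 (cor_neq0 Hb).
have := wform_cor (cr a) Hb; have := wform_cor (cr b) Ha; rewrite (wformC (cr b) (cr a)); nra.
Qed.

(* Equality in Cauchy-Schwarz for [wform] makes the coroots, hence the roots,
   proportional. *)
Lemma pairing_cor_ge2 a b : a \in rts -> b \in rts ->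
  2 <= pairing b (cr a) -> 2 <= pairing a (cr b) -> b = a \/ b = - a.
Proof.
move=> Ha Hb.
have := wform_cor (cr a) Hb; have := wform_cor (cr b) Ha; rewrite (wformC (cr b) (cr a)).
set X := wform (cr a) (cr b); set Ca := wform (cr a) (cr a); set Cb := wform (cr b) (cr b).
set Ar := pairing b (cr a); set Br := pairing a (cr b) => K2 K1 A2 B2.
have Ca0 : 0 < Ca := wform_gt0 (cor_neq0 Ha).
have Cb0 : 0 < Cb := wform_gt0 (cor_neq0 Hb).
have CS : Ca * Cb <= X * X.
  have E : (Ar * Br) * (Ca * Cb) = 4 * (X * X).
    have -> : (Ar * Br) * (Ca * Cb) = (Ar * Cb) * (Br * Ca) by ring.
    by rewrite K1 K2; ring.
  have : 4 <= Ar * Br by nra.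
  nra.
set d := Cb *: cr a - X *: cr b.
have d0 : d = 0.
  apply: wform_eq0; apply/eqP; rewrite eq_le wform_ge0 andbT.
  have -> : wform d d = Cb * (Ca * Cb - X * X).
    by rewrite /d wformBl !wformBr !wformZl !wformZr -/Ca -/Cb -/X (wformC (cr b)) -/X; ring.
  nra.
have Ca_neq0 : Ca != 0 by rewrite gt_eqF.
have Cb_neq0 : Cb != 0 by rewrite gt_eqF.
have cor_ab : cr a = (X / Cb) *: cr b.
  apply/matrixP => i j; have := congr1 (fun m : 'cV[R]_n => m i j) d0.
  rewrite /d !mxE => E; have E' : X * cr b i j = Cb * cr a i j by lra.
  by rewrite mulrAC E' mulrAC divff ?mul1r.
have ab : a = (X / Ca) *: b.
  apply: row_pairing_inj => u; rewrite pairingZl.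
  have K3 := wform_cor u Ha; have K4 := wform_cor u Hb.
  rewrite -/Ca cor_ab wformZr in K3; rewrite -/Cb in K4.
  apply: (mulIf Ca_neq0); rewrite K3.
  have -> : 2 * (X / Cb * wform u (cr b)) = X / Cb * (2 * wform u (cr b)) by ring.
  by rewrite -K4; field; rewrite Ca_neq0 Cb_neq0.
have : (X / Ca) *: b \in rts by rewrite -ab.
by case/(roots_reduced Hb) => c1; rewrite c1 ?scale1r ?scaleN1r in ab; [left | right];
  rewrite ab ?opprK.
Qed.

Lemma rootsB_pairing_gt0 a b : a \in rts -> b \in rts -> b != a -> b != - a ->
  0 < pairing b (cr a) -> b - a \in rts.
Proof.
move=> Ha Hb b_a b_Na ba_gt0.
have ab_gt0 := pairing_cor_gt0C Ha Hb ba_gt0.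
have [A HA] := intrP (roots_int Ha Hb); have [B HB] := intrP (roots_int Hb Ha).
have [A1|A1] := eqVneq A 1.
  by have := roots_refl Ha Hb; rewrite reflmx_row HA A1 scale1r.
have [B1|B1] := eqVneq B 1.
  by have := rootsN (roots_refl Hb Ha); rewrite reflmx_row HB B1 scale1r opprB.
have A2 : 2 <= A by move: ba_gt0; rewrite HA ltr0z; lia.
have B2 : 2 <= B by move: ab_gt0; rewrite HB ltr0z; lia.
have := @pairing_cor_ge2 a b Ha Hb.
rewrite HA HB -[2 : R]/((2 : int)%:~R) !ler_int A2 B2.
by move=> /(_ isT isT)[] eq_b; move: b_a b_Na; rewrite eq_b eqxx.
Qed.

End InvariantForm.

Section SimpleReflection.
Variables (R : realType) (n : nat) (D : AffRootData R n).
Local Notation rts := (roots D).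
Local Notation cr := (cor D).
Local Notation bp := (basept D).
Implicit Types (b c : 'rV[R]_n).

Lemma posroot_subr_simple j c : simpleroot D j -> posroot D c -> c - j \in rts ->
  posroot D (c - j).
Proof.
move=> [j_pos j_indec] c_pos cj_root; apply/andP; split => //.
rewrite ltNge; apply/negP => cj_ge0; apply: j_indec.
exists c, (- (c - j)); split => //; last by rewrite opprB addrC subrK.
rewrite /posroot rootsN // pairingNl oppr_lt0 lt_neqAle eq_sym cj_ge0 andbT.
exact: pairing_basept_neq0.
Qed.

Section RootString.
Variables (j b : 'rV[R]_n) (N : nat).
Hypothesis j_simple : simpleroot D j.
Hypothesis b_pos : posroot D b.
Hypothesis b_Nmul : forall x : R, b != x *: j.
Hypothesis bj_N : pairing b (cr j) = N%:R.

Let j_root : j \in rts. Proof. by case: j_simple => /andP[]. Qed.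

Lemma root_string_neq (x y : R) : b - x *: j != y *: j.
Proof. by apply: contra_neq (b_Nmul (x + y)) => eq_b; rewrite scalerDl -eq_b addrC subrK. Qed.

Lemma root_string_root i : (i < N)%N ->
  (forall m, (m <= i)%N -> posroot D (b - m%:R *: j)) -> b - i.+1%:R *: j \in rts.
Proof.
move=> iN pos_upto.
have [i2N|Ni2] := ltnP i.*2 N.
  have -> : b - i.+1%:R *: j = (b - i%:R *: j) - j.
    by rewrite -natr1 scalerDl scale1r opprD addrA.
  have /andP[bi_root _] := pos_upto i (leqnn i).
  have bi_j : b - i%:R *: j != j by move: (root_string_neq i%:R 1); rewrite scale1r.
  have bi_Nj : b - i%:R *: j != - j by move: (root_string_neq i%:R (-1)); rewrite scaleN1r.
  apply: (rootsB_pairing_gt0 j_root bi_root bi_j bi_Nj).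
  rewrite pairingBl pairingZl (pairing_cor j_root) bj_N subr_gt0.
  by rewrite -natrM ltr_nat muln2.
have /andP[bk_root _] := pos_upto (N - i.+1)%N ltac:(lia).
have -> : b - i.+1%:R *: j =
    b - (N - i.+1)%:R *: j - pairing (b - (N - i.+1)%:R *: j) (cr j) *: j.
  rewrite pairingBl pairingZl (pairing_cor j_root) bj_N natrB //.
  by apply/rowP => k; rewrite !mxE; ring.
by rewrite -reflmx_row; apply: roots_refl.
Qed.

Lemma root_string_posroot i : (i <= N)%N -> posroot D (b - i%:R *: j).
Proof.
elim/ltn_ind: i => -[_ _|i IH iN]; first by rewrite scale0r subr0.
have pos_upto m : (m <= i)%N -> posroot D (b - m%:R *: j) by move=> mi; apply: IH; lia.
have -> : b - i.+1%:R *: j = (b - i%:R *: j) - j.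
  by rewrite -natr1 scalerDl scale1r opprD addrA.
apply: posroot_subr_simple => //; first exact: pos_upto.
have -> : b - i%:R *: j - j = b - i.+1%:R *: j.
  by rewrite -natr1 scalerDl scale1r opprD addrA.
exact: root_string_root.
Qed.

End RootString.

Lemma posroot_srefl_simple j b : simpleroot D j -> posroot D b ->
  (forall x : R, b != x *: j) -> posroot D (b *m srefl D j).
Proof.
move=> j_simple b_pos b_Nmul.
have [/andP[j_root j_neg] _] := j_simple; have /andP[b_root b_neg] := b_pos.
rewrite /srefl reflmx_row.
have [m bj_m] := intrP (roots_int j_root b_root).
have [m_le0|m_gt0] := lerP m 0.
  apply/andP; split; first by have := roots_refl j_root b_root; rewrite reflmx_row.
    rewrite pairingBl pairingZl bj_m; have : (m%:~R : R) <= 0 by rewrite lerz0.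
  nra.
have [N m_N] : exists N : nat, m = N%:Z by exists `|m|%N; lia.
have bj_N : pairing b (cr j) = N%:R by rewrite bj_m m_N.
by rewrite bj_N; apply: (root_string_posroot j_simple b_pos b_Nmul bj_N).
Qed.

End SimpleReflection.

Section Span.
Variables (R : realType) (n : nat).
Implicit Types (a b : 'rV[R]_n) (J : seq 'rV[R]_n).

Lemma spanJ0 J : in_spanJ J 0.
Proof. by exists (fun _ => 0); rewrite big1 // => b _; rewrite scale0r. Qed.

Lemma spanJD J a b : in_spanJ J a -> in_spanJ J b -> in_spanJ J (a + b).
Proof.
move=> [c1 ->] [c2 ->]; exists (fun x => c1 x + c2 x).
by rewrite -big_split; apply: eq_bigr => x _; rewrite scalerDl.
Qed.

Lemma spanJZ J (r : R) a : in_spanJ J a -> in_spanJ J (r *: a).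
Proof.
move=> [c ->]; exists (fun x => r * c x).
by rewrite scaler_sumr; apply: eq_bigr => x _; rewrite scalerA.
Qed.

Lemma spanJ_mem J a : a \in J -> in_spanJ J a.
Proof.
move=> Ja; have count_a (r : R) : \sum_(x <- J) (if x == a then r else 0) *: x =
    ((count_mem a J)%:R * r) *: a.
  elim: (J) => [|x s IH]; first by rewrite big_nil mul0r scale0r.
  rewrite big_cons IH /=; have [->|_] := eqVneq x a; last by rewrite scale0r add0r.
  by rewrite natrD mulrDl mul1r scalerDl.
exists (fun x => if x == a then ((count_mem a J)%:R)^-1 else 0).
by rewrite count_a divff ?scale1r // pnatr_eq0 -lt0n -has_count has_pred1.
Qed.

Lemma spanJ_mulmx J (A : 'M[R]_n) b : (forall j, j \in J -> j *m A \in J) ->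
  in_spanJ J b -> in_spanJ J (b *m A).
Proof.
move=> JA [c ->]; rewrite mulmx_suml big_seq.
apply: (big_ind (in_spanJ J)); [exact: spanJ0 | exact: spanJD|].
by move=> j Jj; rewrite -scalemxAl; apply/spanJZ/spanJ_mem/JA.
Qed.

End Span.

Section WJ.
Variables (R : realType) (n : nat) (D : AffRootData R n).

Lemma inWJ_posroot_outside J M b : (forall a, a \in J -> simpleroot D a) ->
  inWJ D J M -> posroot D b -> ~ in_spanJ J b ->
  posroot D (b *m M) /\ ~ in_spanJ J (b *m M).
Proof.
move=> J_simple WM; elim: WM b => [|a w Ja _ IH] b b_pos b_out; first by rewrite mulmx1.
rewrite mulmxA; apply: IH.
  apply: posroot_srefl_simple b_pos _; first exact: J_simple.
  by move=> x; apply/eqP => eq_b; apply: b_out; rewrite eq_b; apply/spanJZ/spanJ_mem.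
move=> ba_in; apply: b_out.
rewrite -[b](subrK (pairing b (cor D a) *: a)) -reflmx_row.
by apply: spanJD ba_in _; apply/spanJZ/spanJ_mem.
Qed.

End WJ.

Section Frobenius.
Variables (R : realType) (n : nat) (D : AffRootData R n).
Local Notation rts := (roots D).
Local Notation Th := (theta D).
Local Notation bp := (basept D).
Implicit Types (b c : 'rV[R]_n).

Lemma fl_mulTh_basept b : b \in rts -> fl (b *m Th) bp = fl b bp.
Proof. by move=> Hb; rewrite /fl pairing_mulmx theta_alcove. Qed.

Lemma fl_invTh_basept c : c \in rts -> fl c (invmx Th *m bp) = fl c bp.
Proof.
move=> Hc; rewrite /fl -pairing_mulmx -theta_alcove ?roots_mulThV //.
by rewrite -pairing_mulmx mulmxKV // theta_unit.
Qed.

Lemma posroot_mulTh c : posroot D c -> posroot D (c *m Th).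
Proof.
move=> c_pos; have /andP[c_root _] := c_pos.
rewrite /posroot roots_mulTh c_root; have /andP[_] := floor_itv (pairing (c *m Th) bp).
by rewrite -/(fl _ _) fl_mulTh_basept // fl_basept_pos.
Qed.

Lemma posroot_mulThV c : posroot D c -> posroot D (c *m invmx Th).
Proof.
move=> c_pos; have /andP[c_root _] := c_pos.
rewrite /posroot roots_mulThV c_root.
have /andP[_] := floor_itv (pairing (c *m invmx Th) bp).
rewrite -/(fl _ _) -fl_mulTh_basept ?roots_mulThV // mulmxKV ?theta_unit //.
by rewrite fl_basept_pos.
Qed.

Variable J : seq 'rV[R]_n.
Hypothesis J_theta : forall a, (a \in J) = (a *m invmx Th \in J).

Lemma outside_spanJ_mulTh c : ~ in_spanJ J c -> ~ in_spanJ J (c *m Th).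
Proof.
move=> c_out cTh_in; apply: c_out.
have := spanJ_mulmx (A := invmx Th) _ cTh_in; rewrite mulmxK ?theta_unit //.
by apply=> j; rewrite -J_theta.
Qed.

Lemma outside_spanJ_mulThV c : ~ in_spanJ J c -> ~ in_spanJ J (c *m invmx Th).
Proof.
move=> c_out cTh_in; apply: c_out.
have := spanJ_mulmx (A := Th) _ cTh_in; rewrite mulmxKV ?theta_unit //.
by apply=> j Jj; rewrite J_theta mulmxK ?theta_unit.
Qed.

End Frobenius.

Lemma normrD_same_sign (a d : int) : 0 <= a * d -> `|a + d| = `|a| + `|d|.
Proof. by move=> ad; have [a0|a0] := lerP 0 a; have [d0|d0] := lerP 0 d; nia. Qed.

Lemma big_normD_same_sign (T : eqType) (r : seq T) (A d : T -> int) :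
  (forall b, b \in r -> 0 <= A b * d b) ->
  \sum_(b <- r) `|A b + d b| = \sum_(b <- r) `|A b| ->
  forall b, b \in r -> d b = 0.
Proof.
move=> same_sign eq_sums b rb.
have split_sum : \sum_(c <- r) `|A c + d c| = \sum_(c <- r) `|A c| + \sum_(c <- r) `|d c|.
  by rewrite -big_split; apply: eq_big_seq => c /same_sign/normrD_same_sign.
have /eqP : \sum_(c <- r) `|d c| = 0 by lia.
rewrite psumr_eq0 => [/allP/(_ b rb)|c _]; last exact: normr_ge0.
by rewrite normr_eq0 => /eqP.
Qed.

Section Length.
Variables (R : realType) (n : nat) (D : AffRootData R n).
Local Notation rts := (roots D).
Local Notation bp := (basept D).

Lemma big_roots_even (h : 'rV[R]_n -> int) : (forall a, a \in rts -> h (- a) = h a) ->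
  \sum_(a <- rts) h a = (\sum_(a <- rts | posroot D a) h a) *+ 2.
Proof.
move=> h_even; rewrite (bigID (posroot D)) /= mulr2n; congr (_ + _).
rewrite -[in LHS](perm_big _ (perm_rootsN D)) big_map.
rewrite big_seq_cond [RHS]big_seq_cond; apply: eq_big => a.
  by case Ha: (a \in rts) => //=; rewrite posrootN // negbK.
by case/andP => Ha _; rewrite h_even.
Qed.

Lemma len_double x : inWt D x ->
  ((len D x)%:R : int) *+ 2 = \sum_(b <- rts) `|fl b (act x bp) - fl b bp|.
Proof.
move=> Wx; rewrite big_roots_even => [|b Hb]; last first.
  by rewrite (flN_act Wx Hb) (flN_basept Hb) -normrN; congr `|_|; ring.
by rewrite /len natr_sum; congr (_ *+ 2); apply: eq_bigr => a _; rewrite natz abszE.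
Qed.

End Length.

Section Conjugation.
Variables (R : realType) (n : nat) (D : AffRootData R n).
Local Notation rts := (roots D).
Local Notation Th := (theta D).
Local Notation bp := (basept D).
Implicit Types (b c : 'rV[R]_n).

Variables (al : 'rV[R]_n) (k : int) (y : Wt R n) (J : seq 'rV[R]_n) (w : 'M[R]_n).
Hypothesis Hwall : wall D al k.
Hypothesis Hy : inWt D y.
Hypothesis J_simple : forall a, a \in J -> simpleroot D a.
Hypothesis J_theta : forall a, (a \in J) = (a *m invmx Th \in J).
Hypothesis Hw : inW D w.
Hypothesis y_alcove : JW_alcove D J w y.

Local Notation s := (saff D al k).
Local Notation z := (mulWt s (mulWt y (delta D s))).
Local Notation jump := (wall_jump D al k).

Hypothesis len_z : len D z = len D y.

Let al_root : al \in rts := wall_root Hwall.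
Let Ws : inWt D s := inWt_wall Hwall.
Let uTh : Th \in unitmx := theta_unit D.
Let uy : y.1 \in unitmx := inW_unit (proj1 Hy).
Let uw : w \in unitmx := inW_unit Hw.

Definition psi b := b *m y.1 *m Th.
Definition psiV b := b *m invmx Th *m invmx y.1.
Definition outside c := posroot D (c *m w) /\ ~ in_spanJ J (c *m w).
Definition excess b : int := fl b (act y bp) - fl b bp.
Definition defect b : int := jump (psi b) - jump b.

Lemma psi_root b : b \in rts -> psi b \in rts.
Proof. by move=> Hb; rewrite /psi roots_mulTh; apply: inW_roots Hb; case: Hy. Qed.

Lemma psiN b : psi (- b) = - psi b.
Proof. by rewrite /psi !mulNmx. Qed.

Lemma psiVK : cancel psiV psi.
Proof. by move=> b; rewrite /psi /psiV mulmxKV // mulmxKV. Qed.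

Lemma psiK : cancel psi psiV.
Proof. by move=> b; rewrite /psi /psiV mulmxK // mulmxK. Qed.

Lemma psi_inj : injective psi.
Proof. exact: can_inj psiK. Qed.

Lemma fl_delta_saff b : b \in rts ->
  fl b (act (delta D s) bp) = fl b bp + jump (b *m Th).
Proof.
move=> Hb; have bTh : b *m Th \in rts by rewrite roots_mulTh.
have bThs : b *m Th *m s.1 \in rts by apply: inW_roots bTh; case: Ws.
have -> : act (delta D s) bp = Th *m act s (invmx Th *m bp).
  by rewrite /act /delta /deltaW /= mulmxDr !mulmxA -[_ *m invmx Th *m bp]mulmxA.
rewrite /wall_jump {1}/fl -pairing_mulmx -/(fl _ _) !(fl_act _ Ws bTh).
by rewrite fl_invTh_basept // fl_mulTh_basept //; ring.
Qed.

Lemma fl_mul_delta_saff b : b \in rts ->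
  fl b (act (mulWt y (delta D s)) bp) = fl b (act y bp) + jump (psi b).
Proof.
move=> Hb; have by_root : b *m y.1 \in rts by apply: inW_roots Hb; case: Hy.
by rewrite actM !(fl_act _ Hy Hb) fl_delta_saff // /psi; ring.
Qed.

Lemma len_z_defect :
  ((len D z)%:R : int) *+ 2 = \sum_(b <- rts) `|excess b + defect b|.
Proof.
rewrite len_double; last by apply: inWtM Ws (inWtM Hy (inWt_delta Ws)).
rewrite -(big_roots_mulW _ (@genW_srefl _ _ D (inRoots D) al al_root)).
apply: eq_big_seq => b Hb; have Hbs : b *m srefl D al \in rts by apply: roots_refl.
rewrite actM -{2}[bp](act_saffK Hwall) !(fl_act _ Ws Hbs) /= -mulmxA sreflK // mulmx1.
by rewrite fl_mul_delta_saff // /excess /defect /wall_jump; congr `|_|; ring.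
Qed.

Lemma sum_excess_defect :
  \sum_(b <- rts) `|excess b + defect b| = \sum_(b <- rts) `|excess b|.
Proof. by rewrite -len_z_defect -len_double // len_z. Qed.

Lemma excessN b : b \in rts -> excess (- b) = - excess b.
Proof. by move=> Hb; rewrite /excess (flN_act Hy Hb) (flN_basept Hb); ring. Qed.

Lemma defectN b : b \in rts -> defect (- b) = - defect b.
Proof. by move=> Hb; rewrite /defect psiN !(wall_jumpN Hwall) ?psi_root //; ring. Qed.

Lemma excess_ge0 c : outside c -> 0 <= excess c.
Proof.
move=> [cw_pos cw_out]; have := y_alcove.2 _ cw_pos cw_out.
by rewrite mulmxK // /kalc /kval act1 lerD2r subr_ge0.
Qed.

Lemma outside_root c : outside c -> c \in rts.
Proof. by move=> [/andP[cw _] _]; have := inW_rootsV Hw cw; rewrite mulmxK. Qed.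

Lemma outsideN c : outside c -> ~ outside (- c).
Proof.
move=> [cw_pos _] [Ncw_pos _]; have /andP[cw _] := cw_pos.
by move: Ncw_pos; rewrite mulNmx posrootN // cw_pos.
Qed.

Let J_roots a : a \in J -> a \in rts.
Proof. by move=> /J_simple[/andP[]]. Qed.

Let WJ_y : inWJ D J (invmx w *m y.1 *m deltaW D w) := y_alcove.1.

Lemma outside_psi c : outside c -> outside (psi c).
Proof.
move=> [cw_pos cw_out]; rewrite /outside.
have -> : psi c *m w = c *m w *m (invmx w *m y.1 *m deltaW D w) *m Th.
  by rewrite /psi /deltaW !mulmxA (mulmxK uw) (mulmxKV uTh).
have [pos out] := inWJ_posroot_outside J_simple WJ_y cw_pos cw_out.
by split; [apply: posroot_mulTh | apply: outside_spanJ_mulTh].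
Qed.

Lemma outside_psiV c : outside c -> outside (psiV c).
Proof.
move=> [cw_pos cw_out]; rewrite /outside; set M := invmx w *m y.1 *m deltaW D w.
have -> : psiV c *m w = c *m w *m invmx Th *m invmx M.
  apply: (canRL (mulmxK (genW_unit J_roots WJ_y))).
  by rewrite /M /psiV /deltaW !mulmxA (mulmxK uw) (mulmxKV uy) (mulmxKV uTh).
apply: inWJ_posroot_outside (genW_inv J_roots WJ_y) _ _ => //.
  exact: posroot_mulThV.
exact: outside_spanJ_mulThV.
Qed.

Lemma outside_jump_psi c : outside c -> jump c != 0 -> jump (psi c) != 0 -> psi c = c.
Proof.
move=> c_out jc jpc; have c_root := outside_root c_out.
have [//|pc_c] := eqVneq (psi c) c.
have [pc_Nc|pc_Nc] := eqVneq (psi c) (- c).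
  by case: (outsideN c_out); rewrite -pc_Nc; apply: outside_psi.
by rewrite (wall_jump_eq0_off Hwall c_root (psi_root c_root) jc pc_c pc_Nc) eqxx in jpc.
Qed.

Lemma defect_eq0_off x b : x \in rts -> b \in rts -> jump (psi x) != 0 ->
  b != x -> b != - x -> b != psi x -> b != - psi x -> defect b = 0.
Proof.
move=> Hx Hb jpx b_x b_Nx b_px b_Npx.
have px_root := psi_root Hx.
rewrite /defect (wall_jump_eq0_off Hwall px_root Hb jpx) //.
rewrite (wall_jump_eq0_off Hwall px_root (psi_root Hb) jpx) //.
  by rewrite (inj_eq psi_inj).
by rewrite -psiN (inj_eq psi_inj).
Qed.

Lemma defect_pair_absurd c c2 : outside c -> outside c2 ->
  excess c = 0 -> defect c = -1 -> defect c2 = 1 ->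
  (forall b, b \in rts -> b != c -> b != - c -> b != c2 -> b != - c2 -> defect b = 0) ->
  False.
Proof.
move=> c_out c2_out Ac dc dc2 d_off.
have c_root := outside_root c_out; have c2_root := outside_root c2_out.
suff same_sign b : b \in rts -> 0 <= excess b * defect b.
  by have := big_normD_same_sign same_sign sum_excess_defect c_root; rewrite dc.
move=> Hb; have [->|b_c] := eqVneq b c; first by rewrite Ac mul0r.
have [->|b_Nc] := eqVneq b (- c); first by rewrite excessN // Ac oppr0 mul0r.
have [->|b_c2] := eqVneq b c2; first by rewrite dc2 mulr1 excess_ge0.
have [->|b_Nc2] := eqVneq b (- c2).
  by rewrite excessN // defectN // dc2 mulrNN mulr1 excess_ge0.
by rewrite d_off // mulr0.
Qed.

Lemma excess_defect_ge0 c : outside c -> 0 <= excess c + defect c.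
Proof.
move=> c_out; have c_root := outside_root c_out; have pc_out := outside_psi c_out.
have A_ge0 := excess_ge0 c_out; rewrite /defect.
have /andP[? ?] := wall_jump_bound Hwall c_root.
have /andP[? ?] := wall_jump_bound Hwall (psi_root c_root).
have [|jump_lt] := lerP (jump c) (jump (psi c)); first lia.
have jump0 : jump c = 0 \/ jump (psi c) = 0.
  have [|jc] := eqVneq (jump c) 0; [by left | right].
  apply/eqP/negPn/negP => jpc.
  by rewrite (outside_jump_psi c_out jc jpc) ltxx in jump_lt.
have [|A_lt1] := lerP 1 (excess c); first lia.
have Ac : excess c = 0 by lia.
exfalso; case: jump0 => [jc0|jpc0].
- have jpc : jump (psi c) = -1 by lia.
  have jpc_neq0 : jump (psi c) != 0 by rewrite jpc.
  have jppc : jump (psi (psi c)) = 0.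
    apply/eqP/negPn/negP => jppc.
    by move: jpc; rewrite (psi_inj (outside_jump_psi pc_out jpc_neq0 jppc)) jc0.
  apply: (defect_pair_absurd c_out pc_out Ac) => [||b Hb b_c b_Nc b_pc b_Npc].
  + by rewrite /defect jc0 jpc.
  + by rewrite /defect jppc jpc.
  + exact: (defect_eq0_off c_root Hb jpc_neq0).
- have jc1 : jump c = 1 by lia.
  have c2_out := outside_psiV c_out; have pc2 : psi (psiV c) = c := psiVK c.
  have jc2 : jump (psiV c) = 0.
    apply/eqP/negPn/negP => jc2.
    have jpc2 : jump (psi (psiV c)) != 0 by rewrite pc2 jc1.
    have := outside_jump_psi c2_out jc2 jpc2; rewrite pc2 => c_c2.
    by move: jpc0; rewrite {1}c_c2 pc2 jc1.
  apply: (defect_pair_absurd c_out c2_out Ac) => [||b Hb b_c b_Nc b_c2 b_Nc2].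
  + by rewrite /defect jpc0 jc1.
  + by rewrite /defect pc2 jc1 jc2.
  + by apply: (defect_eq0_off (outside_root c2_out) Hb); rewrite ?pc2 ?jc1.
Qed.

Lemma fl_saff_le c : outside c ->
  fl c (act s bp) <= fl c (act (mulWt y (delta D s)) bp).
Proof.
move=> c_out; have := excess_defect_ge0 c_out.
by rewrite fl_mul_delta_saff ?outside_root // /excess /defect /wall_jump; lia.
Qed.

Lemma inWJ_conj_saff :
  inWJ D J (invmx (s.1 *m w) *m z.1 *m deltaW D (s.1 *m w)).
Proof.
rewrite /= invmxM ?srefl_unit // invmx_srefl // deltaWM -/(srefl D al).
set S := srefl D al; have SS : S *m S = 1%:M := sreflK al_root.
have dSdS : deltaW D S *m deltaW D S = 1%:M.
  by rewrite -deltaWM SS /deltaW mulmx1 mulmxV.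
move: dSdS y_alcove.1; move: (deltaW D S) (deltaW D w) => dS dw dSdS.
by rewrite -!mulmxA (mulmxA S) SS mul1mx !mulmxA -(mulmxA _ dS dS) dSdS mulmx1.
Qed.

Lemma kalc_conj_saff b : posroot D b -> ~ in_spanJ J b ->
  kalc D (b *m invmx (s.1 *m w)) (1%:M, 0) <= kalc D (b *m invmx (s.1 *m w)) z.
Proof.
move=> b_pos b_out; have /andP[b_root _] := b_pos.
have c_out : outside (b *m invmx w) by rewrite /outside mulmxKV.
have cs_root : b *m invmx w *m srefl D al \in rts.
  by apply: roots_refl => //; apply: inW_rootsV.
rewrite /= invmxM ?srefl_unit // invmx_srefl // mulmxA /kalc /kval act1 lerD2r.
rewrite -/(fl _ _) -/(fl _ _) actM -{1}[bp](act_saffK Hwall) !(fl_act _ Ws cs_root) /=.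
by rewrite -mulmxA sreflK // mulmx1 lerD2r fl_saff_le.
Qed.

Lemma JW_alcove_conj_saff : JW_alcove D J (s.1 *m w) z.
Proof. by split; [exact: inWJ_conj_saff | exact: kalc_conj_saff]. Qed.

End Conjugation.

Theorem lemma4p4p3 (R : realType) (n : nat) (D : AffRootData R n)
  (y s : Wt R n) (J : seq 'rV[R]_n) (w : 'M[R]_n) :
  inWt D y -> simple_aff D s ->
  len D (mulWt s (mulWt y (delta D s))) = len D y ->
  (forall a, a \in J -> simpleroot D a) ->
  (forall a, (a \in J) = (a *m invmx (theta D) \in J)) ->
  inW D w ->
  JW_alcove D J w y ->
  JW_alcove D J (s.1 *m w) (mulWt s (mulWt y (delta D s))).
Proof.
move=> Wy [al [k [Hwall ->]]] len_z J_simple J_theta Ww y_alcove.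
exact: JW_alcove_conj_saff.
Qed.
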